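(* Let $F:[n]^\ell\to\mathbb R$ be permutation-invariant and $0\le i\le\ell$. Then $$\eta_i\le2^i\binom{\ell}{i}\sum_{j=0}^i\binom{i}{j}\mathbb{E}_{Y\in[n]^j}\big[\delta_Y(F)^2\big],$$ and moreover this inequality has a degree-2 sum-of-squares proof in the formal variables $(F(X))_{X\in[n]^\ell}$ from the permutation-invariance axioms $\mathcal{A}_{inv}$.
   Context: For $T\in[n]^\ell$, $\chi_T(X)=\exp(\frac{2\pi i}{n}\sum_jT_jx_j)$ on $[n]^\ell=(\mathbb Z/n\mathbb Z)^\ell$, $|T|=|\{j:T_j\ne0\}|$, $\hat F(T)=\mathbb{E}_XF(X)\overline{\chi_T(X)}$, $F_i=\sum_{|T|=i}\hat F(T)\chi_T$, and $\eta_i=\mathbb{E}_{X\in[n]^\ell}|F_i(X)|^2=\sum_{|T|=i}|\hat F(T)|^2$. $F$ is permutation-invariant if $F(x_1,\dots,x_\ell)=F(x_{\sigma(1)},\dots,x_{\sigma(\ell)})$ for all $\sigma\in S_\ell$; $\mathcal{A}_{inv}$ is the set of these equalities. For $Y\in[n]^j$, $\delta_Y(F)=\mathbb{E}_{x\in[n]^{\ell-j}}F(Y,x)$, and $\delta_\emptyset(F)=\mathbb{E}_XF(X)$. *)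

From HB Require Import structures.
From mathcomp Require Import all_boot all_order all_algebra all_fingroup.
From mathcomp Require Import reals trigo.
From mathcomp Require Import complex.
Set Implicit Arguments. Unset Strict Implicit. Unset Printing Implicit Defensive.
Import Order.TTheory GRing.Theory Num.Theory.
Local Open Scope ring_scope.

Definition pt (l n : nat) := {ffun 'I_l -> 'I_n}.

Definition expect (R : realType) (T : finType) (f : T -> R) : R :=
  (\sum_(x : T) f x) / #|T|%:R.

Definition expectC (R : realType) (T : finType) (f : T -> R[i]) : R[i] :=
  (\sum_(x : T) f x) / #|T|%:R.

Definition permpt (l n : nat) (s : {perm 'I_l}) (X : pt l n) : pt l n :=
  [ffun k => X (s k)].

Definition perm_invariant (R : realType) (l n : nat) (F : pt l n -> R) : Prop :=
  forall (s : {perm 'I_l}) (X : pt l n), F X = F (permpt s X).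

Definition chi (R : realType) (l n : nat) (T X : pt l n) : R[i] :=
  let th : R := (2 * pi / n%:R) * (\sum_(j < l) (nat_of_ord (T j) * nat_of_ord (X j))%:R) in
  ((cos th)%:C + 'i%C * (sin th)%:C)%C.

Definition fhat (R : realType) (l n : nat) (F : pt l n -> R) (T : pt l n) : R[i] :=
  expectC (fun X : pt l n => (F X)%:C%C * ((chi R T X)^*)%C).

Definition wt (l n : nat) (T : pt l n) : nat := #|[set j | nat_of_ord (T j) != 0%N]|.

Definition eta_i (R : realType) (l n : nat) (F : pt l n -> R) (i : nat) : R[i] :=
  \sum_(T : pt l n | wt T == i) `|fhat F T| ^+ 2.

(* (Y, x) in [n]^l for Y in [n]^j, x in [n]^(l-j), j <= l *)
Definition catpt (l n j : nat) (hj : (j <= l)%N) (Y : pt j n) (x : pt (l - j) n) : pt l n :=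
  [ffun k => match split (cast_ord (esym (subnKC hj)) k) with
             | inl a => Y a
             | inr b => x b end].

Definition delta (R : realType) (l n j : nat) (hj : (j <= l)%N) (F : pt l n -> R) (Y : pt j n) : R :=
  expect (fun x : pt (l - j) n => F (catpt hj Y x)).

Definition Edelta2 (R : realType) (l n j : nat) (hj : (j <= l)%N) (F : pt l n -> R) : R :=
  expect (fun Y : pt j n => (delta hj F Y) ^+ 2).

Definition rhsC7 (R : realType) (l n i : nat) (hi : (i <= l)%N) (F : pt l n -> R) : R :=
  (2 ^+ i * 'C(l, i)%:R) *
    \sum_(j < i.+1) 'C(i, j)%:R * Edelta2 (leq_trans (leq_ord j) hi) F.

(* A degree-2 sum-of-squares proof of  rhs >= eta  in the formal variables
   v = (F(X))_X from the axioms A_inv = { F(X) - F(sigma X) = 0 }: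
   a polynomial identity (checked pointwise on all real v, which is equivalent
   over the infinite field R)
     rhs(v) - eta(v) = sum_k (c_k + <a_k, v>)^2
                       + sum_{X, sigma} (d_{X,sigma} + <b_{X,sigma}, v>) (v(X) - v(sigma X)),
   i.e. squares of polynomials of degree <= 1 plus multiples of the axioms by
   polynomials of degree <= 1 (so every term has degree <= 2). *)
Definition sos2_proof (R : realType) (l n i : nat) (hi : (i <= l)%N) : Prop :=
  exists (sq : seq (R * (pt l n -> R)))
         (d : pt l n -> {perm 'I_l} -> R)
         (b : pt l n -> {perm 'I_l} -> pt l n -> R),
  forall v : pt l n -> R,
    ((rhsC7 hi v)%:C - eta_i v i)%C =
    ((\sum_(p <- sq) (p.1 + \sum_(Z : pt l n) p.2 Z * v Z) ^+ 2
      + \sum_(X : pt l n) \sum_(s : {perm 'I_l})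
           (d X s + \sum_(Z : pt l n) b X s Z * v Z) * (v X - v (permpt s X)))%:C)%C.

Set Warnings "-notation-overridden,-ambiguous-paths,-notation-incompatible-prefix".
(* Write v = (F(X))_X for the formal variables.  Extending a character T' of
   [n]^j by zeros gives hat v (T',0) = hat(delta v)(T'), so Parseval yields
   E_Y delta_Y(v)^2 = sum_T' |hat v (T',0)|^2 (Edelta2_fourier).  Group the
   weight-i characters by their support S and let sortS S be a permutation of
   the coordinates moving S to the first i positions; since permuting the
   variables permutes the Fourier coefficients, the characters of support S
   are among the placed ones (T',0) o sortS S, hence (eta_decomp)
     eta_i = sum_{|S|=i} E delta_i(v o sortS S)^2 - (squares of the others).
   Each E delta_i(v o s)^2 equals E delta_i(v)^2 up to the axioms
   v(X) - v(sX) times linear forms (difference of squares), and the rest of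
   the right-hand side, after removing C(l,i) E delta_i(v)^2, is a nonnegative
   combination of squares of linear forms.  This gives the certificate
   (sos_certificate); at an invariant point the axiom part vanishes, which
   gives the inequality.  In fact it proves eta_i <= C(l,i) E delta_i(F)^2. *)
From HB Require Import structures.
From mathcomp Require Import all_boot all_order all_algebra all_fingroup.
From mathcomp Require Import reals trigo.
From mathcomp Require Import complex.
From mathcomp Require Import ring lra.
Import Order.TTheory GRing.Theory Num.Theory.
Local Open Scope ring_scope.
Local Open Scope complex_scope.

Section RootsOfUnity.
Variable R : realType.

Definition cis (a : R) : R[i] := (cos a)%:C + 'i * (sin a)%:C.
Definition om (n : nat) : R[i] := cis (2 * pi / n%:R).

Lemma cis_exp (a : R) k : cis a ^+ k = cis (a * k%:R).
Proof.
have cisD b c : cis b * cis c = cis (b + c).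
  rewrite /cis cosD sinD; apply/eqP; rewrite eq_complex /=.
  by apply/andP; split; apply/eqP; ring.
elim: k => [|k IH]; first by rewrite expr0 mulr0 /cis cos0 sin0 mulr0 addr0.
by rewrite exprS IH cisD -addn1 natrD mulrDr mulr1 addrC.
Qed.

Lemma cis_conj (a : R) : cis a * (cis a)^*%C = 1.
Proof.
apply/eqP; rewrite eq_complex /=; apply/andP; split; apply/eqP; last by ring.
rewrite -[RHS](cos2Dsin2 a) !expr2; ring.
Qed.

Lemma om_n n : (0 < n)%N -> om n ^+ n = 1.
Proof.
move=> hn; rewrite /om cis_exp mulfVK ?pnatr_eq0 -?lt0n //.
by rewrite mulr_natl /cis cos2pi sin2pi mulr0 addr0.
Qed.

Lemma cos_lt1 (t : R) : 0 < t < pi *+ 2 -> cos t < 1.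
Proof.
case/andP=> t0 t2.
have hs : 0 < sin (t / 2).
  apply: sin_gt0_pi; apply/andP; split; first by rewrite divr_gt0.
  by rewrite ltr_pdivrMr // mulr_natr.
have ht : t = (t / 2) *+ 2 by rewrite -mulr_natr divfK // pnatr_eq0.
rewrite ht cos_mulr2n cos2sin2.
have : 0 < sin (t / 2) ^+ 2 by apply: exprn_gt0.
lra.
Qed.

(* ... and a primitive one, since cos (2 pi k / n) < 1 for 0 < k < n. *)
Lemma om_prim n : (0 < n)%N -> n.-primitive_root (om n).
Proof.
move=> hn; apply/andP; split => //; apply/forallP => j; rewrite unity_rootE.
case: (eqVneq j.+1 n) => [->|hj]; first by rewrite om_n // eqxx.
rewrite eqbF_neg; apply/eqP.
rewrite /om cis_exp => /(congr1 (@complex.Re R)) /=.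
rewrite mulr0 subr0 mul0r addr0 => /eqP; apply/negP; rewrite lt_eqF //.
apply: cos_lt1; apply/andP; split.
  by rewrite mulr_gt0 ?divr_gt0 ?mulr_gt0 ?pi_gt0 ?ltr0n.
have jn : (j.+1 < n)%N by rewrite ltn_neqAle hj ltn_ord.
have h1 : j.+1%:R / n%:R < (1:R) by rewrite ltr_pdivrMr ?ltr0n // mul1r ltr_nat.
rewrite mulrAC -mulrA -mulr_natr.
have hp : 0 < (pi:R) := pi_gt0 R.
set a := (_ / _) in h1 *; nra.
Qed.

Lemma om_conj n k : om n ^+ k * (om n ^+ k)^*%C = 1.
Proof. by rewrite /om cis_exp cis_conj. Qed.

Lemma geo_sum n (hn : (0 < n)%N) (a b : 'I_n) :
  \sum_(t < n) (om n ^+ a * (om n ^+ b)^*%C) ^+ t = (a == b)%:R * n%:R.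
Proof.
case: (eqVneq a b) => [<-|ne].
  rewrite om_conj (eq_bigr (fun _ => 1)) => [|t _]; last by rewrite expr1n.
  by rewrite sumr_const card_ord mul1r.
set z := (om n ^+ a * (om n ^+ b)^*%C).
have zn : z ^+ n = 1.
  rewrite /z exprMn -rmorphXn -!exprM mulnC exprM om_n // expr1n mulnC exprM om_n //.
  by rewrite expr1n rmorph1 mulr1.
have z1 : z != 1.
  apply/eqP => hz; move: ne => /eqP; apply.
  have : om n ^+ a = om n ^+ b.
    by rewrite -[LHS]mulr1 -(om_conj n b) [om n ^+ b * _]mulrC mulrA -/z hz mul1r.
  move/eqP; rewrite (eq_prim_root_expr (om_prim n hn)) !modn_small //.
  by move/eqP/val_inj.
have := subrX1 z n; rewrite zn subrr => /esym/eqP.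
by rewrite mulf_eq0 subr_eq0 (negbTE z1) /= => /eqP->; rewrite mul0r.
Qed.

End RootsOfUnity.

Section Characters.
Variable R : realType.

Lemma Re_real_comb (K : finType) (x : K -> R) (c : K -> R[i]) :
  complex.Re (\sum_k (x k)%:C * c k) = \sum_k complex.Re (c k) * x k.
Proof.
apply: (big_rec2 (fun a b => complex.Re b = a)) => // k a b _ <-.
by case: (c k) => ? ?; case: b => ? ? /=; ring.
Qed.

Lemma Im_real_comb (K : finType) (x : K -> R) (c : K -> R[i]) :
  complex.Im (\sum_k (x k)%:C * c k) = \sum_k complex.Im (c k) * x k.
Proof.
apply: (big_rec2 (fun a b => complex.Im b = a)) => // k a b _ <-.
by case: (c k) => ? ?; case: b => ? ? /=; ring.
Qed.

Definition dot {l n : nat} (T X : pt l n) : nat := \sum_(j < l) (T j * X j)%N.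

Lemma chi_om l n (T X : pt l n) : chi R T X = om R n ^+ dot T X.
Proof. by rewrite /om cis_exp /chi /dot natr_sum. Qed.

Lemma card_pt m n : #|pt m n| = (n ^ m)%N.
Proof. by rewrite /pt card_ffun !card_ord. Qed.

Lemma chi_orth m n (hn : (0 < n)%N) (X X' : pt m n) :
  \sum_(T : pt m n) (chi R T X)^*%C * chi R T X' = (X' == X)%:R * (n ^ m)%:R.
Proof.
have -> : \sum_(T : pt m n) (chi R T X)^*%C * chi R T X' = \sum_(T : {ffun 'I_m -> 'I_n}) \prod_(j < m) (om R n ^+ X' j * (om R n ^+ X j)^*%C) ^+ T j.
  apply: eq_bigr => T _; rewrite !chi_om /dot.
  rewrite !(big_morph (fun k => om R n ^+ k) (exprD _) (expr0 _)) rmorph_prod -big_split /=.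
  by apply: eq_bigr => j _; rewrite exprMn -rmorphXn -!exprM mulrC !(mulnC (T j)).
rewrite -(bigA_distr_bigA (fun j (t : 'I_n) => (om R n ^+ X' j * (om R n ^+ X j)^*%C) ^+ t)) /=.
under eq_bigr => j _ do rewrite geo_sum //.
case: (eqVneq X' X) => [->|ne].
  rewrite (eq_bigr (fun _ => n%:R)) => [|j _]; last by rewrite eqxx mul1r.
  by rewrite prodr_const card_ord natrX mul1r.
have [j hj] : exists j, X' j != X j.
  apply/existsP; apply: contraNT ne => /existsPn h; apply/eqP/ffunP => j.
  by apply/eqP; move: (h j); rewrite negbK.
by rewrite (bigD1 j) //= (negbTE hj) !mul0r.
Qed.

Lemma parseval m n (hn : (0 < n)%N) (f : pt m n -> R) :
  \sum_(T : pt m n) `|fhat f T| ^+ 2 = (expect (fun X => f X ^+ 2))%:C.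
Proof.
set N : R[i] := #|pt m n|%:R.
have N0 : N != 0 by rewrite pnatr_eq0 card_pt -lt0n expn_gt0 hn.
have fhat_conj T : (fhat f T)^*%C = (\sum_X (f X)%:C * chi R T X) / N.
  rewrite /fhat /expectC rmorphM fmorphV rmorph_nat rmorph_sum; congr (_ * _).
  by apply: eq_bigr => X _; rewrite rmorphM; congr (_ * _); [exact: conjc_real | exact: conjcK].
have expand T : `|fhat f T| ^+ 2
    = \sum_X \sum_X' ((f X)%:C * (f X')%:C) * ((chi R T X)^*%C * chi R T X') / (N * N).
  rewrite sqr_normc fhat_conj /fhat /expectC mulrACA big_distrl /= -invfM big_distrl /=.
  apply: eq_bigr => X _; rewrite !big_distrr /= big_distrl /=.
  by apply: eq_bigr => X' _; rewrite mulrACA.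
under eq_bigr => T _ do rewrite expand.
rewrite exchange_big /=; under eq_bigr => X _ do rewrite exchange_big /=.
under eq_bigr => X _ do under eq_bigr => X' _ do
  rewrite -big_distrl -big_distrr /= chi_orth //.
rewrite /expect rmorphM fmorphV rmorph_nat rmorph_sum /= -/N big_distrl /=.
apply: eq_bigr => X _; rewrite (bigD1 X) //= big1 => [|X' hX']; last first.
  by rewrite (negbTE hX') !mul0r mulr0 mul0r.
rewrite eqxx mul1r addr0 -card_pt -/N invfM mulrA mulfK // rmorphXn.
by rewrite expr2.
Qed.

End Characters.

Section SplitCoordinates.
Variables (l n j : nat) (hj : (j <= l)%N).

Let lo (a : 'I_j) : 'I_l := cast_ord (subnKC hj) (lshift (l - j) a).
Let hi (b : 'I_(l - j)) : 'I_l := cast_ord (subnKC hj) (rshift j b).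

Lemma catpt_lo (Y : pt j n) (x : pt (l - j) n) a : catpt hj Y x (lo a) = Y a.
Proof.
by rewrite /catpt ffunE cast_ordK -[lshift _ a]/(unsplit (inl a)) unsplitK.
Qed.

Lemma catpt_hi (Y : pt j n) (x : pt (l - j) n) b : catpt hj Y x (hi b) = x b.
Proof.
by rewrite /catpt ffunE cast_ordK -[rshift _ b]/(unsplit (inr b)) unsplitK.
Qed.

Lemma catpt_bij : bijective (fun p : pt j n * pt (l - j) n => catpt hj p.1 p.2).
Proof.
exists (fun X : pt l n => ([ffun a => X (lo a)], [ffun b => X (hi b)])).
  by case=> Y x; congr (_, _); apply/ffunP => a; rewrite ffunE ?catpt_lo ?catpt_hi.
move=> X; apply/ffunP => k /=; rewrite /catpt ffunE.
by case: splitP => [a|b] /= e; rewrite ffunE; congr (X _); apply: val_inj; rewrite /= -e.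
Qed.

Lemma sum_catpt (V : nmodType) (G : pt l n -> V) :
  \sum_(X : pt l n) G X = \sum_(Y : pt j n) \sum_(x : pt (l - j) n) G (catpt hj Y x).
Proof.
rewrite pair_bigA /= (reindex (fun p : pt j n * pt (l - j) n => catpt hj p.1 p.2)) //.
exact/onW_bij/catpt_bij.
Qed.

Definition ext (hn : (0 < n)%N) (T' : pt j n) : pt l n := catpt hj T' [ffun _ => Ordinal hn].

Lemma dot_ext (hn : (0 < n)%N) (T' Y : pt j n) (x : pt (l - j) n) :
  dot (ext hn T') (catpt hj Y x) = dot T' Y.
Proof.
rewrite /dot (reindex (cast_ord (subnKC hj))) /=; last first.
  by exists (cast_ord (esym (subnKC hj))) => k _; rewrite ?cast_ordK ?cast_ordKV.
rewrite big_split_ord /= -[X in _ = X]addn0 /ext; congr (_ + _)%N.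
  by apply: eq_bigr => a _; rewrite -/(lo a) !catpt_lo.
by apply: big1 => b _; rewrite -/(hi b) !catpt_hi ffunE /= mul0n.
Qed.

Variable R : realType.

Lemma fhat_ext (hn : (0 < n)%N) (w : pt l n -> R) (T' : pt j n) :
  fhat w (ext hn T') = fhat (delta hj w) T'.
Proof.
rewrite /fhat /expectC /delta /expect (sum_catpt _).
under eq_bigr => Y _ do under eq_bigr => x _ do rewrite !chi_om dot_ext -chi_om.
under eq_bigr => Y _ do rewrite -big_distrl /= -rmorph_sum.
under [in RHS]eq_bigr => Y _ do rewrite rmorphM fmorphV /= rmorph_nat mulrAC.
rewrite -big_distrl /= -[in RHS]mulrA -invfM -natrM !card_pt -expnD subnK //.
Qed.

Lemma Edelta2_fourier (hn : (0 < n)%N) (w : pt l n -> R) :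
  (Edelta2 hj w)%:C = \sum_(T' : pt j n) `|fhat w (ext hn T')| ^+ 2.
Proof. by under eq_bigr => T' _ do rewrite fhat_ext; rewrite parseval. Qed.

End SplitCoordinates.
Arguments ext {l n j} hj hn T'.
Arguments Edelta2_fourier {l n j} hj {R} hn w.

Section Permutations.
Variables (l n : nat).

Lemma permptK (s : {perm 'I_l}) : cancel (@permpt l n s^-1) (permpt s).
Proof. by move=> Y; apply/ffunP => k; rewrite !ffunE permK. Qed.

Lemma permptKV (s : {perm 'I_l}) : cancel (@permpt l n s) (permpt s^-1).
Proof. by move=> Y; apply/ffunP => k; rewrite !ffunE permKV. Qed.

Lemma dot_perm (s : {perm 'I_l}) (T Y : pt l n) : dot T (permpt s^-1 Y) = dot (permpt s T) Y.
Proof.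
rewrite /dot (reindex_inj (@perm_inj _ s)) /=.
by apply: eq_bigr => k _; rewrite !ffunE permK.
Qed.

Lemma fhat_perm (R : realType) (s : {perm 'I_l}) (v : pt l n -> R) (T : pt l n) :
  fhat (fun X => v (permpt s X)) T = fhat v (permpt s T).
Proof.
rewrite /fhat /expectC; congr (_ / _).
rewrite (reindex (permpt s^-1)); last by exists (permpt s) => Y _; rewrite ?permptK ?permptKV.
by apply: eq_bigr => Y _; rewrite permptK !chi_om dot_perm.
Qed.

End Permutations.

Section SupportSorting.
Variable l : nat.
Implicit Type S : {set 'I_l}.

(* sort_fun S lists the coordinates of S first (in increasing order), then
   those of its complement; it defines a permutation sortS S of 'I_l that maps
   S onto the initial segment {0, ..., #|S| - 1}. *)
Definition sort_fun S (k : 'I_l) : nat :=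
  if k \in S then index k (enum S) else (#|S| + index k (enum (~: S)))%N.

Lemma index_enum_lt {A : {set 'I_l}} {k} : k \in A -> (index k (enum A) < #|A|)%N.
Proof. by move=> kA; rewrite cardE index_mem mem_enum. Qed.

Lemma sort_fun_lt S k : (sort_fun S k < l)%N.
Proof.
rewrite /sort_fun; case: ifP => kS.
  apply: leq_trans (index_enum_lt kS) _.
  by apply: leq_trans (max_card (mem S)) _; rewrite card_ord.
have := index_enum_lt (_ : k \in ~: S); rewrite in_setC kS => /(_ isT) h.
have e : l = (#|S| + #|~: S|)%N by rewrite cardsC card_ord.
by rewrite [X in (_ < X)%N]e ltn_add2l.
Qed.

Lemma sort_fun_inj S : injective (fun k => Ordinal (sort_fun_lt S k)).
Proof.
move=> k1 k2 /(congr1 val) /=; rewrite /sort_fun.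
have index_inj (A : {set 'I_l}) k k' : k \in A -> k' \in A ->
    index k (enum A) = index k' (enum A) -> k = k'.
  move=> kA k'A e; rewrite -mem_enum in kA; rewrite -mem_enum in k'A.
  by rewrite -(nth_index k kA) e (nth_index k k'A).
case: ifP => h1; case: ifP => h2.
- exact: index_inj.
- by move=> e; have := index_enum_lt h1; rewrite e ltnNge leq_addr.
- by move=> e; have := index_enum_lt h2; rewrite -e ltnNge leq_addr.
- by move/addnI; apply: index_inj; rewrite in_setC ?h1 ?h2.
Qed.

Definition sortS S : {perm 'I_l} := perm (@sort_fun_inj S).

Lemma sortS_lt S k : (sortS S k < #|S|)%N = (k \in S).
Proof.
rewrite /sortS permE /= /sort_fun; case: ifP => kS; first exact: index_enum_lt.
by rewrite ltnNge leq_addr.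
Qed.

End SupportSorting.
Arguments sortS {l} S.

Section SupportDecomposition.
Variables (l n i : nat) (hn : (0 < n)%N) (hi : (i <= l)%N).
Implicit Type S : {set 'I_l}.

Definition supp (T : pt l n) : {set 'I_l} := [set j | nat_of_ord (T j) != 0%N].

Definition place (S : {set 'I_l}) (T' : pt i n) : pt l n := permpt (sortS S) (ext hi hn T').

Definition restrict (S : {set 'I_l}) (T : pt l n) : pt i n :=
  [ffun a => T ((sortS S)^-1%g (widen_ord hi a))].

Lemma ext_lo (T' : pt i n) (a : 'I_i) : ext hi hn T' (widen_ord hi a) = T' a.
Proof.
have -> : widen_ord hi a = cast_ord (subnKC hi) (lshift (l - i) a) by apply: val_inj.
by rewrite /ext catpt_lo.
Qed.

Lemma ext_hi (T' : pt i n) (k : 'I_l) : (i <= k)%N -> nat_of_ord (ext hi hn T' k) = 0%N.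
Proof.
move=> ik; rewrite /ext /catpt ffunE.
case: splitP => [a /= e|b e]; last by rewrite ffunE.
by move: (ltn_ord a); rewrite -e ltnNge ik.
Qed.

Lemma restrict_place S (T' : pt i n) : restrict S (place S T') = T'.
Proof. by apply/ffunP => a; rewrite /restrict ffunE /place /permpt ffunE permKV ext_lo. Qed.

Lemma place_restrict S (T : pt l n) : #|S| = i -> supp T = S -> place S (restrict S T) = T.
Proof.
move=> cS sT; apply/ffunP => k; rewrite /place ffunE.
case: (ltnP (sortS S k) i) => h.
  have e : widen_ord hi (Ordinal h) = sortS S k by apply: val_inj.
  by rewrite -e ext_lo /restrict ffunE e permK.
apply: val_inj; rewrite /= ext_hi //.
have : k \notin S by rewrite -sortS_lt cS -leqNgt.
by rewrite -sT inE negbK => /eqP ->.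
Qed.

(* T' is good for S when place S T' has full support S (T' has no zero entry). *)
Definition good S (T' : pt i n) : bool := supp (place S T') == S.

Lemma eta_decomp (R : realType) (v : pt l n -> R) :
  eta_i v i = \sum_(S : {set 'I_l} | #|S| == i)
    ((Edelta2 hi (fun X => v (permpt (sortS S) X)))%:C
     - \sum_(T' : pt i n | ~~ good S T') `|fhat v (place S T')| ^+ 2).
Proof.
rewrite /eta_i (partition_big supp (fun S : {set 'I_l} => #|S| == i)) //=.
apply: eq_bigr => S /eqP cS.
rewrite (reindex_onto (place S) (restrict S)) => [|T /andP[_ /eqP sT]]; last first.
  exact: place_restrict.
rewrite (Edelta2_fourier hi hn).
under [in RHS]eq_bigr => T' _ do rewrite fhat_perm -/(place S T').
rewrite [in RHS](bigID (good S)) /= addrK.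
apply: eq_bigl => T'; rewrite restrict_place eqxx andbT /good.
case: (eqVneq (supp (place S T')) S) => [e|_]; last by rewrite andbF.
have wt_supp : wt (place S T') = #|supp (place S T')| by [].
by rewrite andbT wt_supp e cS eqxx.
Qed.

End SupportDecomposition.
Arguments place {l n i} hn hi S T'.
Arguments good {l n i} hn hi S T'.
Arguments eta_decomp {l n i} hn hi {R} v.

Section Certificates.
Variables (R : realType) (l n : nat).
Implicit Types (v : pt l n -> R) (sq : seq (R * (pt l n -> R))).

Definition lf (a v : pt l n -> R) : R := \sum_(Z : pt l n) a Z * v Z.

Lemma lf_scaleD (c : R) (a b : pt l n -> R) v :
  lf (fun Z => c * (a Z + b Z)) v = c * (lf a v + lf b v).
Proof.
rewrite /lf -big_split big_distrr /=.
by apply: eq_bigr => Z _; ring.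
Qed.

Definition avg_coef {K : finType} (f : K -> pt l n) : pt l n -> R :=
  fun Z => \sum_(x : K) #|K|%:R^-1 * (f x == Z)%:R.

Lemma expect_lf {K : finType} (f : K -> pt l n) v :
  expect (fun x => v (f x)) = lf (avg_coef f) v.
Proof.
rewrite /expect /lf big_distrl /=; under [in RHS]eq_bigr => Z _ do rewrite big_distrl /=.
rewrite exchange_big /=; apply: eq_bigr => x _.
rewrite (bigD1 (f x)) //= eqxx mulr1 mulrC big1 ?addr0 // => Z /negbTE hZ.
by rewrite eq_sym hZ mulr0 mul0r.
Qed.

Definition sos_value sq v : R := \sum_(p <- sq) (p.1 + \sum_(Z : pt l n) p.2 Z * v Z) ^+ 2.

Definition axiom_value (d : pt l n -> {perm 'I_l} -> R)
    (b : pt l n -> {perm 'I_l} -> pt l n -> R) v : R :=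
  \sum_(X : pt l n) \sum_(s : {perm 'I_l})
     (d X s + \sum_(Z : pt l n) b X s Z * v Z) * (v X - v (permpt s X)).

Lemma sos_value_cat sq1 sq2 v : sos_value (sq1 ++ sq2) v = sos_value sq1 v + sos_value sq2 v.
Proof. by rewrite /sos_value big_cat. Qed.

Lemma sos_value_flatten (sqs : seq (seq (R * (pt l n -> R)))) v :
  sos_value (flatten sqs) v = \sum_(sq <- sqs) sos_value sq v.
Proof. by rewrite /sos_value big_flatten. Qed.

Lemma certificate_ge0 sq d b v :
  perm_invariant v -> 0 <= sos_value sq v + axiom_value d b v.
Proof.
move=> inv_v; rewrite [axiom_value _ _ _]big1 ?addr0 => [|X _]; last first.
  by rewrite big1 // => s _; rewrite -inv_v subrr mulr0.
by rewrite sumr_ge0 // => p _; rewrite sqr_ge0.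
Qed.

Definition weighted_squares {K : finType} (P : pred K) (wg : K -> R) (a : K -> pt l n -> R) :
  seq (R * (pt l n -> R)) := [seq (0, fun Z => Num.sqrt (wg k) * a k Z) | k <- enum P].

Lemma sos_value_weighted {K : finType} (P : pred K) (wg : K -> R) (a : K -> pt l n -> R) v :
  (forall k, P k -> 0 <= wg k) ->
  sos_value (weighted_squares P wg a) v = \sum_(k | P k) wg k * lf (a k) v ^+ 2.
Proof.
move=> wg_ge0; rewrite /sos_value big_map big_enum_cond /=.
apply: eq_big => [k|k]; first by rewrite andbT.
rewrite andbT => Pk; rewrite add0r /lf.
under eq_bigr => Z _ do rewrite -mulrA.
by rewrite -big_distrr exprMn sqr_sqrtr ?wg_ge0.
Qed.

Definition axiom_combination {K : finType} (P : pred K) (Xk : K -> pt l n)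
    (sk : K -> {perm 'I_l}) (c : K -> pt l n -> R) : pt l n -> {perm 'I_l} -> pt l n -> R :=
  fun X s Z => \sum_(k | P k) ((Xk k == X)%:R * (sk k == s)%:R) * c k Z.

Lemma axiom_value_combination {K : finType} (P : pred K) (Xk : K -> pt l n)
    (sk : K -> {perm 'I_l}) (c : K -> pt l n -> R) v :
  axiom_value (fun _ _ => 0) (axiom_combination P Xk sk c) v
  = \sum_(k | P k) lf (c k) v * (v (Xk k) - v (permpt (sk k) (Xk k))).
Proof.
have sum_ind (T : finType) (a : T) (G : T -> R) : \sum_(x : T) (a == x)%:R * G x = G a.
  rewrite (bigD1 a) //= eqxx mul1r big1 ?addr0 // => x /negbTE hx.
  by rewrite eq_sym hx mul0r.
have term X s : (0 + \sum_Z axiom_combination P Xk sk c X s Z * v Z) * (v X - v (permpt s X))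
   = \sum_(k | P k) (Xk k == X)%:R * ((sk k == s)%:R * (lf (c k) v * (v X - v (permpt s X)))).
  rewrite add0r /axiom_combination; under eq_bigr => Z _ do rewrite big_distrl /=.
  rewrite exchange_big big_distrl /=; apply: eq_bigr => k _.
  under eq_bigr => Z _ do rewrite -!mulrA.
  by rewrite -!big_distrr /lf /=; ring.
rewrite /axiom_value; under eq_bigr => X _ do under eq_bigr => s _ do rewrite term.
under eq_bigr => X _ do rewrite exchange_big.
rewrite exchange_big; apply: eq_bigr => k _.
under eq_bigr => X _ do rewrite -big_distrr /=.
by rewrite !sum_ind.
Qed.

End Certificates.
Arguments lf {R l n} a v.
Arguments avg_coef {R l n K} f Z.
Arguments sos_value {R l n} sq v.
Arguments axiom_value {R l n} d b v.
Arguments weighted_squares {R l n K} P wg a.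
Arguments axiom_combination {R l n K} P Xk sk c X s Z.

Section Identity.
Variables (R : realType) (l n i : nat) (hn : (0 < n)%N) (hi : (i <= l)%N).
Implicit Type v : pt l n -> R.

Lemma Edelta2_squares j (hj : (j <= l)%N) v :
  Edelta2 hj v = \sum_(Y : pt j n) #|pt j n|%:R^-1 * lf (avg_coef (catpt hj Y)) v ^+ 2.
Proof.
rewrite /Edelta2 /expect big_distrl /=; apply: eq_bigr => Y _.
by rewrite mulrC /delta expect_lf.
Qed.

(* The linear multiplier of the axiom v(Y, x) - v(s(Y, x)) coming from the
   difference of squares delta_Y(v)^2 - delta_Y(v o s)^2. *)
Definition perm_multiplier (s : {perm 'I_l}) (Y : pt i n) : pt l n -> R :=
  fun Z => #|pt i n|%:R^-1 * #|pt (l - i) n|%:R^-1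
           * (avg_coef (catpt hi Y) Z + avg_coef (fun x => permpt s (catpt hi Y x)) Z).

Lemma Edelta2_perm_diff (s : {perm 'I_l}) v :
  Edelta2 hi v - Edelta2 hi (fun X => v (permpt s X)) =
  \sum_(Y : pt i n) \sum_(x : pt (l - i) n)
     lf (perm_multiplier s Y) v * (v (catpt hi Y x) - v (permpt s (catpt hi Y x))).
Proof.
rewrite /Edelta2 /expect -mulrBl -sumrB big_distrl /=; apply: eq_bigr => Y _.
rewrite /perm_multiplier lf_scaleD -!expect_lf -big_distrr /= sumrB.
by rewrite /delta /expect; ring.
Qed.

(* Weights of the remaining terms of the right-hand side after removing
   C(l,i) E delta_i^2; they are nonnegative since 2^i >= 1. *)
Definition rhs_weight (j : 'I_i.+1) : R :=
  2 ^+ i * 'C(l, i)%:R * 'C(i, j)%:R - (nat_of_ord j == i)%:R * 'C(l, i)%:R.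

Lemma rhs_weight_ge0 j : 0 <= rhs_weight j.
Proof.
rewrite /rhs_weight; case: eqP => [e|_]; last by rewrite mul0r subr0 !mulr_ge0 ?exprn_ge0 ?ler0n.
rewrite e binn mul1r mulr1 -[X in _ - X]mul1r -mulrBl mulr_ge0 ?ler0n // subr_ge0.
by apply: exprn_ege1; rewrite ler1n.
Qed.

Lemma rhs_split v :
  rhsC7 hi v - 'C(l, i)%:R * Edelta2 hi v =
  \sum_(j < i.+1) rhs_weight j * Edelta2 (leq_trans (leq_ord j) hi) v.
Proof.
have last_term : \sum_(j < i.+1) ((nat_of_ord j == i)%:R * 'C(l, i)%:R)
                    * Edelta2 (leq_trans (leq_ord j) hi) v = 'C(l, i)%:R * Edelta2 hi v.
  rewrite (bigD1 ord_max) //= eqxx mul1r big1 ?addr0 => [|j hj].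
    by rewrite (bool_irrelevance (leq_trans (leq_ord ord_max) hi) hi).
  have /negbTE -> : nat_of_ord j != i by apply: contra hj => /eqP e; apply/eqP/val_inj.
  by rewrite !mul0r.
rewrite /rhsC7 -last_term big_distrr /= -sumrB; apply: eq_bigr => j _.
by rewrite /rhs_weight mulrBl !mulrA.
Qed.

Definition rhs_squares : seq (R * (pt l n -> R)) :=
  flatten [seq weighted_squares xpredT (fun _ => rhs_weight j / #|pt j n|%:R)
                 (fun Y => avg_coef (catpt (leq_trans (leq_ord j) hi) Y)) | j <- enum 'I_i.+1].

Lemma rhs_squares_value v :
  sos_value rhs_squares v = rhsC7 hi v - 'C(l, i)%:R * Edelta2 hi v.
Proof.
rewrite sos_value_flatten big_map big_enum /= rhs_split; apply: eq_bigr => j _.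
rewrite sos_value_weighted => [|Y _]; last by rewrite divr_ge0 ?rhs_weight_ge0 ?ler0n.
by rewrite Edelta2_squares big_distrr /=; apply: eq_bigr => Y _; rewrite [RHS]mulrA.
Qed.

Definition perm_multipliers : pt l n -> {perm 'I_l} -> pt l n -> R :=
  axiom_combination (fun k : {set 'I_l} * (pt i n * pt (l - i) n) => #|k.1| == i)
    (fun k => catpt hi k.2.1 k.2.2) (fun k => sortS k.1)
    (fun k => perm_multiplier (sortS k.1) k.2.1).

Lemma perm_multipliers_value v :
  axiom_value (fun _ _ => 0) perm_multipliers v =
  'C(l, i)%:R * Edelta2 hi v
  - \sum_(S : {set 'I_l} | #|S| == i) Edelta2 hi (fun X => v (permpt (sortS S) X)).
Proof.
have card_sets (c : R) : \sum_(S : {set 'I_l} | #|S| == i) c = 'C(l, i)%:R * c.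
  rewrite (eq_bigl (fun S => S \in [set S : {set 'I_l} | #|S| == i])) => [|S]; last first.
    by rewrite inE.
  by rewrite sumr_const card_draws card_ord mulr_natl.
rewrite axiom_value_combination -card_sets -sumrB.
under [in RHS]eq_bigr => S _ do rewrite Edelta2_perm_diff pair_bigA /=.
by rewrite [in RHS]pair_big /=; apply: eq_bigl => k; rewrite andbT.
Qed.

Definition fcoef (T Z : pt l n) : R[i] := (chi R T Z)^*%C / #|pt l n|%:R.

Lemma fhat_fcoef v T : fhat v T = \sum_(Z : pt l n) (v Z)%:C * fcoef T Z.
Proof. by rewrite /fhat /expectC big_distrl; apply: eq_bigr => Z _; rewrite mulrA. Qed.

Definition bad : pred ({set 'I_l} * pt i n) := fun k => (#|k.1| == i) && ~~ good hn hi k.1 k.2.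

(* Their squared Fourier coefficients |Re|^2 + |Im|^2 as squares of linear forms. *)
Definition bad_squares : seq (R * (pt l n -> R)) :=
  weighted_squares bad (fun _ => 1) (fun k Z => complex.Re (fcoef (place hn hi k.1 k.2) Z))
  ++ weighted_squares bad (fun _ => 1) (fun k Z => complex.Im (fcoef (place hn hi k.1 k.2) Z)).

Lemma bad_squares_value v :
  eta_i v i = (\sum_(S : {set 'I_l} | #|S| == i) Edelta2 hi (fun X => v (permpt (sortS S) X))
               - sos_value bad_squares v)%:C.
Proof.
rewrite (eta_decomp hn hi) sumrB rmorphB rmorph_sum; congr (_ - _).
rewrite sos_value_cat !sos_value_weighted // -big_split rmorph_sum pair_big_dep /=.
apply: eq_big => // k _.
by rewrite -add_Re2_Im2 !fhat_fcoef Re_real_comb Im_real_comb !mul1r.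
Qed.

Lemma sos_certificate :
  exists sq d b, forall v,
    ((rhsC7 hi v)%:C - eta_i v i)%C = (sos_value sq v + axiom_value d b v)%:C.
Proof.
exists (rhs_squares ++ bad_squares), (fun _ _ => 0), perm_multipliers => v.
rewrite sos_value_cat rhs_squares_value perm_multipliers_value bad_squares_value.
by rewrite -rmorphB; congr (_%:C); ring.
Qed.

End Identity.
Arguments sos_certificate {R l n i} hn hi.

Theorem lemmaC7 (R : realType) (n l i : nat) (hn : (0 < n)%N) (hi : (i <= l)%N) :
  (forall F : pt l n -> R, perm_invariant F -> eta_i F i <= (rhsC7 hi F)%:C%C)
  /\ sos2_proof R n hi.
Proof.
have [sq [d [b certificate]]] := sos_certificate (R := R) hn hi.
split; last by exists sq, d, b.
move=> F invF; rewrite -subr_ge0 certificate ler0c.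
exact: certificate_ge0.
Qed.
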